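(* For all $a,b\ge0$, $$\left|(a+1)e^{-a}-(b+1)e^{-b}\right|\ge|a-b|\sqrt{ab}\,e^{-\frac{a+b}{2}}.$$ *)

From Stdlib Require Import Reals.

(* Set phi x := (x + 1) e^{-x} and psi x := x e^{-x} = - phi' x.  For
   0 <= a <= b write a = m - d, b = m + d with m = (a+b)/2, d = (b-a)/2;
   then ab = m^2 - d^2 and the claim reads phi a - phi b >= G(d) where
   G(t) := 2t sqrt(m^2 - t^2) e^{-m}.  We study the gap
     gap m t := phi (m - t) - phi (m + t) - 2 t sqrt(m^2 - t^2) e^{-m}
   on [0, m): it vanishes at t = 0, and its derivative
     psi (m - t) + psi (m + t) - 2 e^{-m} (sqrt(m^2-t^2) - t^2/sqrt(m^2-t^2))
   is nonnegative, because psi (m - t) psi (m + t) = (m^2 - t^2) e^{-2m},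
   so by AM-GM psi (m - t) + psi (m + t) >= 2 sqrt(m^2 - t^2) e^{-m}.
   The mean value theorem then gives gap m d >= 0 for 0 <= d < m, i.e. the
   inequality for 0 < a <= b; the case a = 0 is trivial (the right-hand side
   vanishes) and the general case follows by symmetry in a and b. *)

From Stdlib Require Import Reals Lra Psatz.
From Coquelicot Require Import Coquelicot.
Open Scope R_scope.

Lemma am_gm_of_mul_eq_sqr (A B s : R) :
  0 <= A -> 0 <= B -> 0 <= s -> A * B = s * s -> 2 * s <= A + B.
Proof.
  intros HA HB Hs Hprod.
  apply Rsqr_incr_0_var; [|lra].
  pose proof (Rle_0_sqr (A - B)). unfold Rsqr in *. nra.
Qed.

Definition phi (x : R) : R := (x + 1) * exp (- x).

Definition psi (x : R) : R := x * exp (- x).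

Lemma psi_mul_sym (m t : R) :
  psi (m - t) * psi (m + t) = (m * m - t * t) * (exp (- m) * exp (- m)).
Proof.
  unfold psi.
  replace ((m - t) * exp (- (m - t)) * ((m + t) * exp (- (m + t))))
    with ((m * m - t * t) * (exp (- (m - t)) * exp (- (m + t)))) by ring.
  rewrite <- !exp_plus.
  now replace (- (m - t) + - (m + t)) with (- m + - m) by ring.
Qed.

Lemma psi_sym_ge (m t : R) : 0 <= t <= m ->
  2 * (sqrt (m * m - t * t) * exp (- m)) <= psi (m - t) + psi (m + t).
Proof.
  intros [Ht Htm].
  assert (Hpos : 0 <= m * m - t * t) by nra.
  apply am_gm_of_mul_eq_sqr.
  - unfold psi; pose proof (exp_pos (- (m - t))); nra.
  - unfold psi; pose proof (exp_pos (- (m + t))); nra.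
  - apply Rmult_le_pos; [apply sqrt_pos | left; apply exp_pos].
  - rewrite psi_mul_sym.
    replace (sqrt (m * m - t * t) * exp (- m) * (sqrt (m * m - t * t) * exp (- m)))
      with (sqrt (m * m - t * t) * sqrt (m * m - t * t) * (exp (- m) * exp (- m)))
      by ring.
    now rewrite sqrt_sqrt.
Qed.

Definition gap (m t : R) : R :=
  phi (m - t) - phi (m + t) - 2 * t * sqrt (m * m - t * t) * exp (- m).

Definition gap' (m t : R) : R :=
  psi (m - t) + psi (m + t)
  - 2 * exp (- m) * (sqrt (m * m - t * t) - t * t / sqrt (m * m - t * t)).

Lemma gap_derivative (m t : R) : 0 <= t < m ->
  derivable_pt_lim (gap m) t (gap' m t).
Proof.
  intros [Ht Htm]. apply is_derive_Reals. unfold gap, gap', phi, psi.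
  assert (Hpos : 0 < m * m - t * t) by nra.
  auto_derive.
  - lra.
  - assert (0 < sqrt (m * m - t * t)) by (apply sqrt_lt_R0; lra).
    replace (m + - t) with (m - t) by ring.
    replace (m * m + - (t * t)) with (m * m - t * t) by ring.
    field; lra.
Qed.

(* The derivative of the gap exceeds 2 e^{-m} t^2 / sqrt(m^2 - t^2) >= 0. *)
Lemma gap'_nonneg (m t : R) : 0 <= t < m -> 0 <= gap' m t.
Proof.
  intros [Ht Htm]. unfold gap'.
  assert (Hs : 0 < sqrt (m * m - t * t)) by (apply sqrt_lt_R0; nra).
  assert (Hfrac : 0 <= t * t / sqrt (m * m - t * t)).
  { apply Rdiv_le_0_compat; nra. }
  pose proof (psi_sym_ge m t ltac:(lra)).
  pose proof (exp_pos (- m)).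
  nra.
Qed.

Lemma gap_zero (m : R) : gap m 0 = 0.
Proof. unfold gap. replace (m - 0) with (m + 0) by ring. ring. Qed.

Lemma gap_nonneg (m d : R) : 0 <= d < m -> 0 <= gap m d.
Proof.
  intros [Hd Hdm].
  destruct (Req_dec d 0) as [->|Hd0]; [rewrite gap_zero; lra|].
  destruct (MVT_cor2 (gap m) (gap' m) 0 d) as [c [Hmvt Hc]]; [lra| |].
  - intros c Hc. apply gap_derivative. lra.
  - rewrite gap_zero in Hmvt.
    pose proof (gap'_nonneg m c ltac:(lra)).
    nra.
Qed.

Lemma phi_diff_ge (a b : R) : 0 < a -> a <= b ->
  (b - a) * sqrt (a * b) * exp (- ((a + b) / 2)) <= phi a - phi b.
Proof.
  intros Ha Hab.
  pose proof (gap_nonneg ((a + b) / 2) ((b - a) / 2) ltac:(lra)) as Hgap.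
  unfold gap in Hgap.
  replace ((a + b) / 2 - (b - a) / 2) with a in Hgap by field.
  replace ((a + b) / 2 + (b - a) / 2) with b in Hgap by field.
  replace ((a + b) / 2 * ((a + b) / 2) - (b - a) / 2 * ((b - a) / 2))
    with (a * b) in Hgap by field.
  replace (2 * ((b - a) / 2)) with (b - a) in Hgap by field.
  lra.
Qed.

Lemma abs_phi_diff_ge (a b : R) : 0 <= a -> a <= b ->
  Rabs (a - b) * sqrt (a * b) * exp (- ((a + b) / 2)) <= Rabs (phi a - phi b).
Proof.
  intros Ha Hab.
  destruct (Req_dec a 0) as [->|Ha0].
  { rewrite Rmult_0_l, sqrt_0, Rmult_0_r, Rmult_0_l. apply Rabs_pos. }
  pose proof (phi_diff_ge a b ltac:(lra) Hab) as Hdiff.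
  assert (0 <= (b - a) * sqrt (a * b) * exp (- ((a + b) / 2))).
  { pose proof (sqrt_pos (a * b)); pose proof (exp_pos (- ((a + b) / 2))).
    apply Rmult_le_pos; [apply Rmult_le_pos|]; lra. }
  rewrite (Rabs_left1 (a - b)), (Rabs_right (phi a - phi b)) by lra.
  lra.
Qed.

Theorem mainTheorem10 (a b : R) (ha : 0 <= a) (hb : 0 <= b) :
  Rabs ((a + 1) * exp (- a) - (b + 1) * exp (- b))
  >= Rabs (a - b) * sqrt (a * b) * exp (- ((a + b) / 2)).
Proof.
  apply Rle_ge. fold (phi a) (phi b).
  destruct (Rle_dec a b) as [Hab|Hba].
  - now apply abs_phi_diff_ge.
  - rewrite (Rabs_minus_sym (phi a)), (Rabs_minus_sym a b), (Rmult_comm a b),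
      (Rplus_comm a b).
    apply abs_phi_diff_ge; lra.
Qed.
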